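(* Suppose there exists a decomposition $U_0,U_1,\ldots,U_d$ of $V$ which is split with respect to the orderings $E_0,\ldots,E_d$ and $E^*_0,\ldots,E^*_d$. Then for $0\le i\le d$: (i) $\sum_{h=0}^iU_h=\sum_{h=0}^iA^hE^*_0V$; (ii) $\sum_{h=0}^iU_h=\sum_{h=0}^iE^*_hV$; (iii) $\sum_{h=i}^dU_h=\sum_{h=0}^{d-i}A^{*h}E_dV$; (iv) $\sum_{h=i}^dU_h=\sum_{h=i}^dE_hV$; (v) $U_i=(E^*_0V+E^*_1V+\cdots+E^*_iV)\cap(E_iV+E_{i+1}V+\cdots+E_dV)$.
   Context: Let $\mathbb K$ be a field, $d\ge 0$ an integer, and $\mathcal A$ a $\mathbb K$-algebra isomorphic to $\mathrm{Mat}_{d+1}(\mathbb K)$, with identity $I$. An element of $\mathcal A$ is multiplicity-free if it has $d+1$ mutually distinct eigenvalues, all in $\mathbb K$; for such $A$ with eigenvalues $\theta_0,\ldots,\theta_d$, the primitive idempotent associated with $\theta_i$ is $E_i=\prod_{j\ne i}(A-\theta_jI)/(\theta_i-\theta_j)$. Standing setup: $A,A^*$ are multiplicity-free elements of $\mathcal A$ ($A^*$ is just a name, not an adjoint); $E_0,\ldots,E_d$ is an ordering of the primitive idempotents of $A$ and $\theta_i$ is the eigenvalue of $A$ for $E_i$; $E^*_0,\ldots,E^*_d$ is an ordering of the primitive idempotents of $A^*$ and $\theta^*_i$ is the eigenvalue of $A^*$ for $E^*_i$; $V$ is an irreducible left $\mathcal A$-module. A decomposition of $V$ is a sequence $U_0,\ldots,U_d$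 of 1-dimensional subspaces with $V=U_0+\cdots+U_d$ (direct sum). Such a decomposition is split (with respect to the orderings $E_0,\ldots,E_d$ and $E^*_0,\ldots,E^*_d$) if $(A-\theta_iI)U_i=U_{i+1}$ for $0\le i\le d-1$, $(A-\theta_dI)U_d=0$, $(A^*-\theta^*_iI)U_i=U_{i-1}$ for $1\le i\le d$, and $(A^*-\theta^*_0I)U_0=0$. *)

From HB Require Import structures.
From mathcomp Require Import all_boot all_order all_algebra.
Set Implicit Arguments. Unset Strict Implicit. Unset Printing Implicit Defensive.
Import GRing.Theory.
Local Open Scope ring_scope.

(* Model: the algebra is 'M[K]_n (n = d+1) and V = K^n (column vectors),
   with the natural left action a . v = a *m v.  A subspace W of V is
   encoded (mxalgebra convention) as the row space of a matrix whose rows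
   are the transposes of spanning vectors; hence a . W is encoded by W *m a^T. *)
Definition act (K : fieldType) (n m : nat) (a : 'M[K]_n) (W : 'M[K]_(m, n))
  : 'M[K]_(m, n) := W *m a^T.

Definition Vfull (K : fieldType) (n : nat) : 'M[K]_n := 1%:M.

(* th is an ordering of d+1 mutually distinct eigenvalues of A in K
   (so A is multiplicity-free and th_0..th_d lists all its eigenvalues). *)
Definition eig_ordering (K : fieldType) (n : nat) (A : 'M[K]_n) (th : 'I_n -> K) :=
  injective th /\ forall i, eigenvalue A (th i).

Definition multiplicity_free (K : fieldType) (n : nat) (A : 'M[K]_n) :=
  exists th : 'I_n -> K, eig_ordering A th.

Definition prim_idem (K : fieldType) (d : nat) (A : 'M[K]_d.+1)
  (th : 'I_d.+1 -> K) (i : 'I_d.+1) : 'M[K]_d.+1 :=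
  \prod_(j < d.+1 | j != i) ((th i - th j)^-1 *: (A - (th j)%:M)).

Definition decomposition (K : fieldType) (d : nat) (U : 'I_d.+1 -> 'M[K]_d.+1) :=
  [/\ forall i, \rank (U i) = 1%N,
      (\sum_(i < d.+1) U i == Vfull K d.+1)%MS &
      mxdirect (\sum_(i < d.+1) U i)].

Definition split_decomposition (K : fieldType) (d : nat) (A As : 'M[K]_d.+1)
  (th ths : 'I_d.+1 -> K) (U : 'I_d.+1 -> 'M[K]_d.+1) :=
  [/\ decomposition U,
      forall i : 'I_d.+1, (i < d)%N ->
        (act (A - (th i)%:M) (U i) == U (inord i.+1))%MS,
      (act (A - (th ord_max)%:M) (U ord_max) == 0 :> 'M[K]_d.+1)%MS,
      forall i : 'I_d.+1, (0 < i)%N ->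
        (act (As - (ths i)%:M) (U i) == U (inord i.-1))%MS &
      (act (As - (ths ord0)%:M) (U ord0) == 0 :> 'M[K]_d.+1)%MS].

(* Each primitive idempotent E_l is the Lagrange interpolation polynomial of A
   at its eigenvalues, so E_l V lies in the th_l-eigenspace (which is at most
   one-dimensional) and the E_l sum to I.  Going down the chain U_h, U_(h-1), ...
   with A* - th*_h shows by induction that E*_l kills U_h for l > h: E*_l U_h is
   an eigenspace of A* for both th*_h and th*_l.  Hence U_0 + ... + U_i lies in
   E*_0 V + ... + E*_i V, and comparing dimensions gives (ii); (iv) is the mirror
   image with A.  Since A - th_h maps U_h onto U_(h+1), U_0 + ... + U_i is also
   spanned by the A^h U_0 with h <= i, which gives (i) and, symmetrically, (iii).
   Finally (v) is a dimension count in the decomposition. *)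

From HB Require Import structures.
From mathcomp Require Import all_boot all_order all_algebra.
From mathcomp Require Import zify.
Set Implicit Arguments. Unset Strict Implicit. Unset Printing Implicit Defensive.
Import GRing.Theory.
Local Open Scope ring_scope.

Section Action.
Variables (K : fieldType) (n : nat).
Implicit Types (a b W Z : 'M[K]_n).

Lemma act1 W : act 1 W = W.
Proof. by rewrite /act trmx1 mulmx1. Qed.

Lemma actM a b W : act (a * b) W = act a (act b W).
Proof. by rewrite /act -mulmxE trmx_mul mulmxA. Qed.

Lemma act_subC a c W : act (a - c%:M) W = act a W - c *: W.
Proof. by rewrite /act linearB /= tr_scalar_mx mulmxBr mul_mx_scalar. Qed.

Lemma act0 a : act a 0 = 0 :> 'M[K]_n.
Proof. exact: mul0mx. Qed.

Lemma actS a W Z : (W <= Z)%MS -> (act a W <= act a Z)%MS.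
Proof. exact: submxMr. Qed.

Lemma act_sumsmx (I : finType) (P : pred I) a (W_ : I -> 'M[K]_n) :
  (act a (\sum_(i | P i) W_ i)%MS :=: \sum_(i | P i) act a (W_ i))%MS.
Proof. exact: sumsmxMr. Qed.

Lemma act_Vfull a : act a (Vfull K n) = a^T.
Proof. exact: mul1mx. Qed.

Lemma act_sumr (I : finType) (P : pred I) (a_ : I -> 'M[K]_n) W :
  act (\sum_(i | P i) a_ i) W = \sum_(i | P i) act (a_ i) W.
Proof. by rewrite /act linear_sum mulmx_sumr. Qed.

Lemma act_sub_adds_subC a c W : (act a W <= act (a - c%:M) W + W)%MS.
Proof.
rewrite -[act a W](subrK (c *: W)) -act_subC.
by apply: addmx_sub_adds => //; apply: scalemx_sub.
Qed.

Lemma act_subC_sub_adds a c W : (act (a - c%:M) W <= act a W + W)%MS.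
Proof.
rewrite act_subC; apply: addmx_sub_adds => //.
by rewrite -scaleNr; apply: scalemx_sub.
Qed.

End Action.

Section MultiplicityFree.
Variables (K : fieldType) (d : nat) (M : 'M[K]_d.+1) (th : 'I_d.+1 -> K).
Local Notation n := d.+1.
Hypothesis hM : eig_ordering M th.

Lemma horner_mx_eq0 (p : {poly K}) :
  (forall m, root p (th m)) -> horner_mx M p = 0.
Proof.
case: hM => th_inj th_eig p_th.
set rs := [seq th m | m <- enum 'I_n].
have urs : uniq_roots rs by rewrite uniq_rootsE map_inj_uniq ?enum_uniq.
have rs_char : \prod_(z <- rs) ('X - z%:P) %= char_poly M.
  have rs_dvd : \prod_(z <- rs) ('X - z%:P) %| char_poly M.
    apply: uniq_roots_dvdp urs; apply/allP => _ /mapP[m _ ->].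
    by rewrite -eigenvalue_root_char.
  rewrite -dvdp_size_eqp // size_char_poly size_prod_XsubC size_map.
  by rewrite size_enum_ord.
have /dvdpP[q ->] : char_poly M %| p.
  rewrite -(eqp_dvdl _ rs_char); apply: uniq_roots_dvdp urs.
  by apply/allP => _ /mapP[m _ ->].
by rewrite rmorphM /= Cayley_Hamilton mulr0.
Qed.

(* The n eigenspaces are nonzero and form a direct sum inside K^n. *)
Lemma mxrank_eigenspace_le1 l : (\rank (eigenspace M (th l)) <= 1)%N.
Proof.
case: hM => th_inj th_eig.
have /mxdirectP /= dsum := @mxdirect_sum_eigenspace _ _ _ M predT th (in2W th_inj).
have := rank_leq_col (\sum_i eigenspace M (th i))%MS.
rewrite dsum (bigD1 l) //=.
have : (\sum_(i < n | i != l) 1 <= \sum_(i < n | i != l) \rank (eigenspace M (th i)))%N.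
  by apply: leq_sum => i _; rewrite lt0n mxrank_eq0; apply: th_eig.
rewrite sum1_card cardC1 card_ord /=.
set r := (\sum_(i < n | _) _)%N => ge_r le_r.
by rewrite -(leq_add2r r) (leq_trans le_r) // add1n ltnS.
Qed.

End MultiplicityFree.

Section PrimitiveIdempotents.
Variables (K : fieldType) (d : nat) (M : 'M[K]_d.+1) (th : 'I_d.+1 -> K).
Hypothesis hM : eig_ordering M th.
Local Notation n := d.+1.
Local Notation E := (prim_idem M th).

Definition lagrange_poly (l : 'I_n) : {poly K} :=
  \prod_(j < n | j != l) ((th l - th j)^-1 *: ('X - (th j)%:P)).

Lemma horner_mx_lagrange l : horner_mx M (lagrange_poly l) = E l.
Proof.
rewrite /lagrange_poly /prim_idem rmorph_prod; apply: eq_bigr => j _.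
by rewrite /= horner_mxZ rmorphB /= horner_mx_X horner_mx_C.
Qed.

Lemma lagrange_poly_eval l m : (lagrange_poly l).[th m] = (m == l)%:R.
Proof.
have th_inj := proj1 hM.
rewrite /lagrange_poly horner_prod; have [->|/negPf ml] := eqVneq m l.
  rewrite big1 // => j jl; rewrite hornerZ hornerXsubC mulVf // subr_eq0.
  by apply: contra jl => /eqP/th_inj ->.
by rewrite (bigD1 m) ?ml //= hornerZ hornerXsubC subrr mulr0 mul0r.
Qed.

Lemma sum_prim_idem : \sum_l E l = 1.
Proof.
have : horner_mx M (\sum_l lagrange_poly l - 1) = 0.
  apply: (horner_mx_eq0 hM) => m; apply/rootP.
  rewrite hornerD hornerN horner_sum hornerC (bigD1 m) //= lagrange_poly_eval eqxx.
  rewrite big1 ?addr0 ?subrr // => l lm.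
  by rewrite lagrange_poly_eval eq_sym (negPf lm).
rewrite rmorphB rmorph_sum rmorph1 /= => /eqP; rewrite subr_eq0 => /eqP <-.
by apply: eq_bigr => l _; rewrite horner_mx_lagrange.
Qed.

Lemma prim_idem_comm c l : (M - c%:M) * E l = E l * (M - c%:M).
Proof.
rewrite -horner_mx_lagrange; apply: comm_mx_horner; apply: comm_mx_sym.
exact: comm_mxB (comm_mx_refl M) (comm_mx_scalar c M).
Qed.

Lemma prim_idem_eigen l : (M - (th l)%:M) * E l = 0.
Proof.
have -> : M - (th l)%:M = horner_mx M ('X - (th l)%:P).
  by rewrite rmorphB /= horner_mx_X horner_mx_C.
rewrite -horner_mx_lagrange -rmorphM; apply: (horner_mx_eq0 hM) => m.
rewrite rootM root_XsubC; have [->|ml] := eqVneq m l; first by rewrite eqxx.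
by rewrite /root lagrange_poly_eval (negPf ml) eqxx orbT.
Qed.

Lemma mxrank_prim_idem l : (\rank (E l) <= 1)%N.
Proof.
apply: leq_trans (mxrank_eigenspace_le1 hM l); apply: mxrankS; apply/eigenspaceP.
apply/eqP; rewrite -subr_eq0 -mul_mx_scalar -mulmxBr mulmxE -prim_idem_comm.
by rewrite prim_idem_eigen.
Qed.

(* E_l W is killed by M - th_l, and also by M - th_h since E_l commutes with M. *)
Lemma act_prim_idem_eq0 h l (W Z : 'M[K]_n) :
  h != l -> (act (M - (th h)%:M) W <= Z)%MS -> act (E l) Z = 0 ->
  act (E l) W = 0.
Proof.
move=> hl WZ EZ; set Y := act (E l) W.
have /eqP : act (M - (th h)%:M) Y = 0.
  by apply/eqP; rewrite /Y -actM prim_idem_comm actM -submx0 -EZ actS.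
rewrite act_subC subr_eq0 => /eqP MY.
have : act (M - (th l)%:M) Y = 0 by rewrite /Y -actM prim_idem_eigen /act trmx0 mulmx0.
rewrite act_subC MY -scalerBl => /eqP; rewrite scaler_eq0 subr_eq0.
case/orP => [/eqP/(proj1 hM) hl'|/eqP //].
by rewrite hl' eqxx in hl.
Qed.

Lemma act_prim_idem_lowering (X : nat -> 'M[K]_n) (o : nat -> 'I_n) (N : nat) :
  act (M - (th (o 0%N))%:M) (X 0%N) = 0 ->
  (forall k, (0 < k <= N)%N -> (act (M - (th (o k))%:M) (X k) <= X k.-1)%MS) ->
  forall k l, (k <= N)%N -> (forall j, (j <= k)%N -> o j != l) ->
  act (E l) (X k) = 0.
Proof.
move=> X0 Xs; elim=> [|k IHk] l le_kN ol.
  by apply: (act_prim_idem_eq0 (Z := 0) (ol _ (leqnn _))); rewrite ?X0 ?act0.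
apply: (act_prim_idem_eq0 (ol _ (leqnn _)) (Xs k.+1 le_kN)).
by apply: IHk => [|j le_jk]; [exact: ltnW | exact/ol/leqW].
Qed.

End PrimitiveIdempotents.

Section Decomposition.
Variables (K : fieldType) (d : nat) (U : 'I_d.+1 -> 'M[K]_d.+1).
Hypothesis hU : decomposition U.
Local Notation n := d.+1.

Lemma mxrank_sumsmx_le (P : pred 'I_n) (F : 'I_n -> 'M[K]_n) :
  (\rank (\sum_(h | P h) F h) <= \sum_(h | P h) \rank (F h))%N.
Proof. exact: (mxrank_sum_leqif _).1. Qed.

Lemma mxrank_sumsmx_decomposition (P : pred 'I_n) :
  \rank (\sum_(h | P h) U h) = #|P|.
Proof.
case: hU => rkU fullU _.
have le_card (Q : pred 'I_n) : (\rank (\sum_(h | Q h) U h) <= #|Q|)%N.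
  by rewrite (leq_trans (mxrank_sumsmx_le _ _)) // -sum1_card leq_sum // => h _; rewrite rkU.
have splitU : (\sum_h U h = \sum_(h | P h) U h + \sum_(h | ~~ P h) U h)%MS.
  exact: bigID.
have := mxrank_adds_leqif (\sum_(h | P h) U h)%MS (\sum_(h | ~~ P h) U h)%MS.
rewrite -splitU (eqmx_rank fullU) mxrank1 => -[le_n _].
apply/eqP; rewrite eqn_leq le_card -(leq_add2r #|[predC P]|) cardC card_ord.
by rewrite (leq_trans le_n) // leq_add2l (le_card [predC P]).
Qed.

Lemma sumsmx_decomposition_prim_idem (M : 'M[K]_n) (th : 'I_n -> K)
    (P : pred 'I_n) :
  eig_ordering M th ->
  (forall h l, P h -> ~~ P l -> act (prim_idem M th l) (U h) = 0) ->
  (\sum_(h | P h) U h == \sum_(h | P h) act (prim_idem M th h) (Vfull K n))%MS.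
Proof.
move=> hM EU0.
have sub_idem : (\sum_(h | P h) U h <= \sum_(h | P h) act (prim_idem M th h) (Vfull K n))%MS.
  apply/sumsmx_subP => h Ph.
  rewrite -[U h]act1 -(sum_prim_idem hM) act_sumr; apply: summx_sub => l _.
  have [Pl|nPl] := boolP (P l); last by rewrite EU0 ?sub0mx.
  by apply: (sumsmx_sup l) => //; apply/actS/submx1.
apply/andP; split => //; rewrite -(mxrank_leqif_sup sub_idem) eqn_leq.
rewrite (mxrankS sub_idem) /= mxrank_sumsmx_decomposition.
rewrite (leq_trans (mxrank_sumsmx_le _ _)) // -sum1_card.
by apply: leq_sum => h _; rewrite act_Vfull mxrank_tr mxrank_prim_idem.
Qed.

Lemma capmx_sumsmx_decomposition (P Q : pred 'I_n) :
  ((\sum_(h | P h) U h) :&: (\sum_(h | Q h) U h) == \sum_(h | P h && Q h) U h)%MS.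
Proof.
set SP := (\sum_(h | P h) U h)%MS; set SQ := (\sum_(h | Q h) U h)%MS.
have sub_cap : (\sum_(h | P h && Q h) U h <= SP :&: SQ)%MS.
  by apply/sumsmx_subP => h /andP[Ph Qh]; rewrite sub_capmx !(sumsmx_sup h).
have addsPQ : (SP + SQ == \sum_(h | P h || Q h) U h)%MS.
  apply/andP; split.
    by rewrite addsmx_sub; apply/andP; split; apply/sumsmx_subP => h Ph;
      apply: (sumsmx_sup h); rewrite ?Ph ?orbT.
  apply/sumsmx_subP => h /orP[Ph|Qh].
    by apply: submx_trans (addsmxSl _ _); apply: (sumsmx_sup h).
  by apply: submx_trans (addsmxSr _ _); apply: (sumsmx_sup h).
apply/andP; split => //; rewrite -(mxrank_leqif_sup sub_cap).
have := mxrank_sum_cap SP SQ; rewrite (eqmx_rank addsPQ).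
rewrite !mxrank_sumsmx_decomposition -(cardUI P Q) => /eqP.
by rewrite eqn_add2l eq_sym.
Qed.

End Decomposition.

Lemma big_ord_leq (R : Type) (idx : R) (op : R -> R -> R) (F : nat -> R) m i :
  (i < m)%N -> \big[op/idx]_(h < m | (h <= i)%N) F h = \big[op/idx]_(h < i.+1) F h.
Proof.
move=> lt_im; rewrite -(big_mkord (fun h => h <= i)%N) -(big_mkord xpredT).
by rewrite (big_nat_widen 0 _ _ _ _ lt_im).
Qed.

Section Krylov.
Variables (K : fieldType) (n : nat) (M : 'M[K]_n) (t : nat -> K) (X : nat -> 'M[K]_n).

Lemma sumsmx_ord_sup (F : nat -> 'M[K]_n) m j :
  (j < m)%N -> (F j <= \sum_(k < m) F k)%MS.
Proof. by move=> lt_jm; apply: (sumsmx_sup (Ordinal lt_jm)). Qed.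

Lemma sumsmx_ord_recr_sub (F : nat -> 'M[K]_n) m :
  (\sum_(k < m) F k <= \sum_(k < m.+1) F k)%MS.
Proof. by rewrite big_ord_recr addsmxSl. Qed.

Lemma sumsmx_raising_chain (Y : 'M[K]_n) i :
  (X 0%N == Y)%MS ->
  (forall k, (k < i)%N -> (act (M - (t k)%:M) (X k) == X k.+1)%MS) ->
  (\sum_(k < i.+1) X k == \sum_(k < i.+1) act (M ^+ k) Y)%MS.
Proof.
move=> /eqmxP X0Y Xs.
suff /eqmxP XR : (\sum_(k < i.+1) X k == \sum_(k < i.+1) act (M ^+ k) (X 0%N))%MS.
  by apply/eqmxP; apply: eqmx_trans XR (eqmx_sums (fun k _ => eqmxMr _ X0Y)).
elim: i Xs => [|i IHi] Xs; first by rewrite !big_ord1 expr0 act1; apply/eqmxP.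
have /andP[S_R R_S] := IHi (fun k lt_ki => Xs k (ltnW lt_ki)).
set S1 := (\sum_(k < i.+1) X k)%MS in S_R R_S *.
set R1 := (\sum_(k < i.+1) act (M ^+ k) (X 0%N))%MS in S_R R_S *.
set S2 := (\sum_(k < i.+2) X k)%MS; set R2 := (\sum_(k < i.+2) act (M ^+ k) (X 0%N))%MS.
have MS1 : (act M S1 <= S2)%MS.
  rewrite act_sumsmx; apply/sumsmx_subP => k _.
  apply: submx_trans (act_sub_adds_subC M (t k) (X k)) _.
  have /andP[Xk1 _] := Xs k (ltn_ord k).
  by rewrite addsmx_sub (submx_trans Xk1) ?sumsmx_ord_sup //; have := ltn_ord k; lia.
have MR1 : (act M R1 :=: \sum_(k < i.+1) act (M ^+ k.+1) (X 0%N))%MS.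
  apply: eqmx_trans; first exact: act_sumsmx.
  by apply: eqmx_sums => k _; rewrite exprS actM.
have R2E : R2 = (X 0%N + \sum_(k < i.+1) act (M ^+ k.+1) (X 0%N))%MS.
  by rewrite /R2 big_ord_recl expr0 act1; congr (_ + _)%MS; apply: eq_bigr => k _; rewrite lift0.
have MR1_R2 : (act M R1 <= R2)%MS by rewrite MR1 R2E addsmxSr.
have Xi_R1 : (X i <= R1)%MS := submx_trans (sumsmx_ord_sup X (ltnSn i)) S_R.
have R1_R2 : (R1 <= R2)%MS := sumsmx_ord_recr_sub (fun k => act (M ^+ k) (X 0%N)) _.
apply/andP; split.
  rewrite /S2 big_ord_recr /= addsmx_sub (submx_trans S_R R1_R2) /=.
  have /andP[_ Xi1] := Xs i (ltnSn i).
  apply: submx_trans Xi1 (submx_trans (act_subC_sub_adds _ _ _) _).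
  by rewrite addsmx_sub (submx_trans (actS M Xi_R1) MR1_R2) (submx_trans Xi_R1 R1_R2).
rewrite R2E addsmx_sub sumsmx_ord_sup //= -MR1.
exact: submx_trans (actS _ R_S) MS1.
Qed.

End Krylov.

Section SplitDecomposition.
Variables (K : fieldType) (d : nat) (A As : 'M[K]_d.+1) (th ths : 'I_d.+1 -> K).
Variable U : 'I_d.+1 -> 'M[K]_d.+1.
Hypotheses (hA : eig_ordering A th) (hAs : eig_ordering As ths).
Hypothesis hU : split_decomposition A As th ths U.
Local Notation n := d.+1.
Local Notation E := (prim_idem A th).
Local Notation Es := (prim_idem As ths).
Local Notation V := (Vfull K n).

Lemma split_lowering k : (0 < k <= d)%N ->
  (act (As - (ths (inord k))%:M) (U (inord k)) == U (inord k.-1))%MS.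
Proof.
case: hU => _ _ _ Udown _ /andP[k0 kd].
by have := Udown (inord k); rewrite inordK //; apply.
Qed.

Lemma split_raising k : (k < d)%N ->
  (act (A - (th (inord k))%:M) (U (inord k)) == U (inord k.+1))%MS.
Proof.
case: hU => _ Uup _ _ _ kd.
have := Uup (inord k); rewrite inordK; last exact: ltnW.
by apply.
Qed.

Lemma split_act_dual_prim_idem (h l : 'I_n) : (h < l)%N -> act (Es l) (U h) = 0.
Proof.
case: hU => _ _ _ _ /eqP U0 lt_hl.
rewrite -[h]inord_val.
apply: (act_prim_idem_lowering hAs (X := fun k => U (inord k)) (o := inord) (N := d)).
- by rewrite (_ : inord 0 = ord0) //; apply: val_inj; rewrite /= inordK.
- by move=> k k_d; case/andP: (split_lowering k_d).
- by rewrite -ltnS.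
- move=> j le_jh; apply/eqP => /(congr1 val); rewrite /= inordK; have := ltn_ord l; lia.
Qed.

Lemma split_act_prim_idem (h l : 'I_n) : (l < h)%N -> act (E l) (U h) = 0.
Proof.
case: hU => _ _ /eqP Ud _ _ lt_lh; have lt_hn := ltn_ord h.
have -> : h = inord (d - (d - h)) by apply: val_inj; rewrite /= inordK; lia.
apply: (act_prim_idem_lowering hA (X := fun k => U (inord (d - k)))
  (o := fun k => inord (d - k)) (N := d)) => //.
- by rewrite subn0 (_ : inord d = ord_max) //; apply: val_inj; rewrite /= inordK.
- move=> k /andP[k0 kd]; have lt_dk : (d - k < d)%N by lia.
  have -> : (d - k.-1 = (d - k).+1)%N by lia.
  by case/andP: (split_raising lt_dk).
- exact: leq_subr.
- move=> j le_j; apply/eqP => /(congr1 val); rewrite /= inordK; have := ltn_ord l; lia.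
Qed.

Lemma split_sum_low (i : nat) :
  (\sum_(h < n | (h <= i)%N) U h == \sum_(h < n | (h <= i)%N) act (Es h) V)%MS.
Proof.
case: (hU) => hdec _ _ _ _.
apply: (sumsmx_decomposition_prim_idem (P := fun h : 'I_n => (h <= i)%N) hdec hAs) => h l le_hi.
by rewrite -ltnNge => lt_il; apply: split_act_dual_prim_idem (leq_ltn_trans le_hi lt_il).
Qed.

Lemma split_sum_high (i : nat) :
  (\sum_(h < n | (i <= h)%N) U h == \sum_(h < n | (i <= h)%N) act (E h) V)%MS.
Proof.
case: (hU) => hdec _ _ _ _.
apply: (sumsmx_decomposition_prim_idem (P := fun h : 'I_n => (i <= h)%N) hdec hA) => h l le_ih.
by rewrite -ltnNge => lt_li; apply: split_act_prim_idem (leq_trans lt_li le_ih).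
Qed.

Lemma split_krylov_low (i : 'I_n) :
  (\sum_(h < n | (h <= i)%N) U h ==
     \sum_(h < n | (h <= i)%N) act (A ^+ h) (act (Es ord0) V))%MS.
Proof.
have U0 : (U (inord 0) == act (Es ord0) V)%MS.
  have := split_sum_low 0; rewrite !(big_pred1 ord0) => [|h|h]; rewrite ?leqn0 //.
  by rewrite (_ : inord 0 = ord0) //; apply: val_inj; rewrite /= inordK.
rewrite (eq_bigr (fun h : 'I_n => U (inord h))) => [|h _]; last by rewrite inord_val.
rewrite (big_ord_leq _ _ (fun h => U (inord h))) // (big_ord_leq _ _ (fun h => act (A ^+ h) _)) //.
apply: (sumsmx_raising_chain (t := fun k => th (inord k)) (X := fun k => U (inord k)) U0).
move=> k lt_ki.
exact: split_raising (leq_trans lt_ki (ltnSE (ltn_ord i))).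
Qed.

Lemma split_krylov_high (i : 'I_n) :
  (\sum_(h < n | (i <= h)%N) U h ==
     \sum_(h < n | (h <= d - i)%N) act (As ^+ h) (act (E ord_max) V))%MS.
Proof.
have Ud : (U (inord (d - 0)) == act (E ord_max) V)%MS.
  have := split_sum_high d; rewrite !(big_pred1 ord_max) => [|h|h]; last 2 first.
  - by rewrite /= -val_eqE /= eqn_leq (ltnSE (ltn_ord h)).
  - by rewrite /= -val_eqE /= eqn_leq (ltnSE (ltn_ord h)).
  by rewrite (_ : inord (d - 0) = ord_max) //; apply: val_inj; rewrite /= subn0 inordK.
rewrite (reindex_inj rev_ord_inj) /=.
rewrite (eq_big (fun k : 'I_n => k <= d - i)%N (fun k : 'I_n => U (inord (d - k)))); last 2 first.
- move=> k; have := ltn_ord i; have := ltn_ord k.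
  by rewrite /= subSS => ? ?; apply/idP/idP; lia.
- by move=> k _; congr U; apply: val_inj; rewrite /= subSS inordK // ltnS leq_subr.
rewrite (big_ord_leq _ _ (fun k => U (inord (d - k)))) ?ltnS ?leq_subr //.
rewrite (big_ord_leq _ _ (fun h => act (As ^+ h) _)) ?ltnS ?leq_subr //.
apply: (sumsmx_raising_chain (t := fun k => ths (inord (d - k)))
  (X := fun k => U (inord (d - k))) Ud) => k lt_k.
have -> : (d - k.+1 = (d - k).-1)%N by lia.
by apply: split_lowering; lia.
Qed.

Lemma split_cap (i : 'I_n) :
  (U i == (\sum_(h < n | (h <= i)%N) act (Es h) V) :&:
          (\sum_(h < n | (i <= h)%N) act (E h) V))%MS.
Proof.
case: (hU) => hdec _ _ _ _.
have /eqmxP lo := split_sum_low i; have /eqmxP hi := split_sum_high i.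
have := capmx_sumsmx_decomposition hdec (fun h : 'I_n => (h <= i)%N) (fun h => (i <= h)%N).
have sumU : (\sum_(h < n | (h <= i)%N && (i <= h)%N) U h)%MS = U i.
  by apply: big_pred1 => h; rewrite /= -eqn_leq.
rewrite sumU => /eqmxP capU.
by apply/eqmxP; apply: eqmx_trans (eqmx_sym capU) (cap_eqmx lo hi).
Qed.

End SplitDecomposition.

Unset Implicit Arguments.

Theorem lemma2p4 (K : fieldType) (d : nat) (A As : 'M[K]_d.+1)
  (th ths : 'I_d.+1 -> K)
  (hA : eig_ordering A th) (hAs : eig_ordering As ths)
  (U : 'I_d.+1 -> 'M[K]_d.+1)
  (hU : split_decomposition A As th ths U) :
  let E := prim_idem A th in
  let Es := prim_idem As ths in
  let V := Vfull K d.+1 in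
  forall i : 'I_d.+1,
  [/\ (\sum_(h < d.+1 | (h <= i)%N) U h ==
         \sum_(h < d.+1 | (h <= i)%N) act (A ^+ h) (act (Es ord0) V))%MS,
      (\sum_(h < d.+1 | (h <= i)%N) U h ==
         \sum_(h < d.+1 | (h <= i)%N) act (Es h) V)%MS,
      (\sum_(h < d.+1 | (i <= h)%N) U h ==
         \sum_(h < d.+1 | (h <= d - i)%N) act (As ^+ h) (act (E ord_max) V))%MS,
      (\sum_(h < d.+1 | (i <= h)%N) U h ==
         \sum_(h < d.+1 | (i <= h)%N) act (E h) V)%MS &
      (U i == (\sum_(h < d.+1 | (h <= i)%N) act (Es h) V) :&:
              (\sum_(h < d.+1 | (i <= h)%N) act (E h) V))%MS].
Proof.
move=> E Es V i; split.
- exact: split_krylov_low hAs hU i.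
- exact: split_sum_low hAs hU i.
- exact: split_krylov_high hA hU i.
- exact: split_sum_high hA hU i.
- exact: split_cap hA hAs hU i.
Qed.
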